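(* Consider $\mathrm{USD}_1$ (stubbornness $p=1$) started from the configuration with $u(0)=0$, $x_1(0)=1$ and $x_2(0)=n-1$. Let $T_1 := \inf\{t \geq 0 : x_2(t) = 0\}$. Then $\Pr[T_1 \leq 7n^2\log^2 n] \geq 1-n^{-2}$.
   Context: Population protocol with $n$ agents, each in a state from $\{1,2,\bot\}$ (Opinion 1, Opinion 2, undecided). At each time step a scheduler picks an ordered pair $(i,j)$ of agents uniformly at random, independently of the past; only the initiator $i$ changes state. In $\mathrm{USD}_p$: if the initiator is $2$ and the responder $1$, the initiator becomes $\bot$; if the initiator is $1$ and the responder $2$, the initiator becomes $\bot$ with probability $1-p$ and otherwise stays $1$ (so for $p=1$ it always stays $1$); if the initiator is $\bot$, it adopts the responder's state; otherwise nothing changes. $x_1(t),x_2(t),u(t)$ are the numbers of agents in states $1,2,\bot$ after $t$ interactions. *)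

From HB Require Import structures.
From mathcomp Require Import all_boot all_order all_algebra.
From mathcomp Require Import reals exp.
Set Implicit Arguments. Unset Strict Implicit. Unset Printing Implicit Defensive.
Import Order.TTheory GRing.Theory Num.Theory.
Local Open Scope ring_scope.

(* Agent states: Some true = opinion 1, Some false = opinion 2, None = undecided (bot). *)
Definition st := option bool.
Definition op1 : st := Some true.
Definition op2 : st := Some false.
Definition undec : st := None.

Definition config (n : nat) := {ffun 'I_n -> st}.

Definition count_st (n : nat) (s : st) (c : config n) : nat := #|[set k | c k == s]|.

Definition upd (n : nat) (c : config n) (i : 'I_n) (s : st) : config n :=
  [ffun k => if k == i then s else c k].

(* USD_p: distribution (list of (probability, new state)) of the initiator's
   new state, given initiator state a and responder state b. *)
Definition usd_out {R : realType} (p : R) (a b : st) : seq (R * st) :=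
  match a, b with
  | Some false, Some true => [:: (1, None)]
  | Some true, Some false => [:: (p, Some true); (1 - p, None)]
  | None, _ => [:: (1, b)]
  | _, _ => [:: (1, a)]
  end.

(* hitP p k c = Pr[ T <= k ] where T = inf { t >= 0 : x_2(t) = 0 }, for the
   USD_p chain started from configuration c.  At each step an ordered pair
   (i, j) of distinct agents is chosen uniformly at random (probability
   1/(n(n-1))), and the initiator i updates according to usd_out. *)
Fixpoint hitP {R : realType} (p : R) (n : nat) (k : nat) (c : config n) : R :=
  if count_st op2 c == 0%N then 1
  else match k with
       | 0 => 0
       | k'.+1 =>
           \sum_(i : 'I_n) \sum_(j : 'I_n | j != i)
             ((n * (n - 1))%:R)^-1 *
             \sum_(o <- usd_out p (c i) (c j)) o.1 * hitP p k' (upd c i o.2)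
       end.

From HB Require Import structures.
From mathcomp Require Import all_boot all_order all_algebra.
From mathcomp Require Import reals exp sequences.
From mathcomp.algebra_tactics Require Import ring lra.
From mathcomp Require Import zify.
Import Order.TTheory GRing.Theory Num.Theory.
Local Open Scope ring_scope.

(* Write a, b, u for the numbers of agents with opinion 1, opinion 2 and no
   opinion, and H for the harmonic number H_(n-1).  Under USD_1 agents of
   opinion 1 never change their mind, so a never decreases.  The
   potential  Phi = b + (n - 1) * sum_(a <= j < n) 1/j  changes by -1 when a 2
   becomes undecided, by -(n-1)/a when an undecided agent adopts 1 and by +1
   when it adopts 2; hence its expected change in one interaction is
   -(ab + u(a + u - 1)) / (n(n-1)) <= -Phi / (n(n-1)(1 + H)).  As Phi >= 2
   while b > 0, induction on k gives
   Pr[T_1 > k] <= (1 - 1/(n(n-1)(1 + H)))^k * Phi / 2,  with Phi = (n-1)(1+H)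
   initially.  Bounding 1 - x <= exp(-x) and H_n - 1 <= ln n turns the claim
   for k >= 7 n^2 ln^2 n - 1 into a polynomial inequality in n and H, which
   holds as soon as H >= 3 and is checked by computation for n < 12. *)

Lemma sum_offdiag (V : nmodType) n (F : 'I_n -> 'I_n -> V) :
  (forall i, F i i = 0) -> \sum_i \sum_(j | j != i) F i j = \sum_i \sum_j F i j.
Proof. by move=> F0; apply: eq_bigr => i _; rewrite [RHS](bigD1 i) //= F0 add0r. Qed.

Section Configurations.
Context {n : nat}.
Implicit Types (c : config n) (i j : 'I_n) (s t : st).

Lemma count_st_upd c i s t :
  (count_st t (upd c i s) + (c i == t) = count_st t c + (s == t))%N.
Proof.
rewrite /count_st (cardD1 i [set k | c k == t]) (cardD1 i [set k | upd c i s k == t]).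
rewrite !inE /upd ffunE eqxx.
have -> : #|[predD1 [set k | [ffun k => if k == i then s else c k] k == t] & i]|
        = #|[predD1 [set k | c k == t] & i]|.
  by apply: eq_card => k; rewrite !inE ffunE; case: (k =P i).
by rewrite [LHS]addnAC [RHS]addnAC [in RHS](addnC (c i == t)).
Qed.

Lemma count_st_updE c i s t :
  count_st t (upd c i s) = (count_st t c + (s == t) - (c i == t))%N.
Proof. by have := count_st_upd c i s t; lia. Qed.

Lemma upd_same c i s : c i = s -> upd c i s = c.
Proof. by move=> <-; apply/ffunP => k; rewrite ffunE; case: (k =P i) => // ->. Qed.

Lemma count_st_gt0 c i : (0 < count_st (c i) c)%N.
Proof. by apply/card_gt0P; exists i; rewrite inE. Qed.

Lemma sum_eq_count (R : pzSemiRingType) c s :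
  \sum_i ((c i == s)%:R : R) = (count_st s c)%:R.
Proof.
rewrite /count_st -sum1_card natr_sum [RHS]big_mkcond /=.
by apply: eq_bigr => i _; rewrite inE; case: (c i == s).
Qed.

Lemma sum_pair_eq_count (R : comPzSemiRingType) c s t :
  \sum_i \sum_j ((c i == s)%:R * (c j == t)%:R : R)
  = (count_st s c * count_st t c)%:R.
Proof.
under eq_bigr do rewrite -mulr_sumr.
by rewrite -mulr_suml !sum_eq_count natrM.
Qed.

Lemma count_st_sum c :
  (count_st op1 c + count_st op2 c + count_st undec c)%N = n.
Proof.
apply/eqP; rewrite -(eqr_nat int) !natrD -!sum_eq_count -!big_split /=.
rewrite -[n in n%:R]card_ord -sum1_card natr_sum; apply/eqP/eq_bigr => i _.
by case: (c i) => [[]|].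
Qed.

(* The new state of the initiator in USD_1, where [usd_out 1] is deterministic
   (its branch of weight 1 - p = 0 never fires). *)
Definition usd1_out (a b : st) : st :=
  match a, b with
  | Some false, Some true => None
  | None, _ => b
  | _, _ => a
  end.

Definition usd1_step c i j : config n := upd c i (usd1_out (c i) (c j)).

Lemma usd1_step_diag c i : usd1_step c i i = c.
Proof. by apply: upd_same; case: (c i) => [[]|]. Qed.

Lemma count_op1_usd1_step c i j :
  (count_st op1 c <= count_st op1 (usd1_step c i j))%N.
Proof.
rewrite /usd1_step; have := count_st_upd c i (usd1_out (c i) (c j)) op1.
by case: (c i) => [[]|]; case: (c j) => [[]|] /=; lia.
Qed.

End Configurations.

Lemma usd_out1E (R : realType) (F : st -> R) a b :
  \sum_(o <- usd_out 1 a b) o.1 * F o.2 = F (usd1_out a b).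
Proof.
by case: a => [[]|]; case: b => [[]|]; rewrite /= !big_cons big_nil /= ?subrr; lra.
Qed.

Section HarmonicSums.
Variable R : realType.

Definition hsum (m p : nat) : R := \sum_(m <= j < p) (j%:R)^-1.

Lemma hsum_ge0 m p : 0 <= hsum m p.
Proof. by apply: sumr_ge0 => j _; rewrite invr_ge0 ler0n. Qed.

Lemma hsum_cat m p q : (m <= p <= q)%N -> hsum m q = hsum m p + hsum p q.
Proof. by move=> /andP[mp pq]; rewrite /hsum (big_cat_nat mp pq). Qed.

Lemma hsum_le_hsum1 m p : (1 <= m)%N -> hsum m p <= hsum 1 p.
Proof.
move=> m1; case: (leqP m p) => mp.
  by rewrite (@hsum_cat 1 m p) ?m1 // lerDr hsum_ge0.
by rewrite /hsum big_geq ?hsum_ge0 // ltnW.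
Qed.

Lemma hsum_ltn m p : (m < p)%N -> hsum m p = m%:R^-1 + hsum m.+1 p.
Proof. exact: big_ltn. Qed.

Lemma hsum_ge_last m p : (m < p)%N -> p.-1%:R^-1 <= hsum m p.
Proof.
case: p => // p mp; rewrite /hsum big_nat_recr //= lerDr; exact: hsum_ge0.
Qed.

Lemma hsum2S m : (0 < m)%N -> hsum 2 m.+1 = hsum 1 m + m%:R^-1 - 1.
Proof.
move=> m_gt0; have := @hsum_ltn 1 m.+1 m_gt0.
by rewrite /hsum big_nat_recr //= invr1 => ->; ring.
Qed.

Lemma ln_ge_hsum m : (0 < m)%N -> hsum 2 m.+1 <= ln m%:R.
Proof.
elim: m => // m IH _.
have [->|m_gt0] := posnP m; first by rewrite /hsum big_geq // ln1.
rewrite /hsum big_nat_recr //= -/(hsum 2 m.+1).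
have m0 : (0 : R) < m%:R by rewrite ltr0n.
have step : m.+1%:R^-1 <= ln m.+1%:R - ln (m%:R : R).
  have := @le_ln1Dx R (- m.+1%:R^-1).
  rewrite (_ : 1 - m.+1%:R^-1 = m%:R / m.+1%:R :> R); last first.
    by rewrite -addn1 natrD; field; lra.
  rewrite ln_div ?posrE ?ltr0n //.
  have x_gtN1 : -1 < - m.+1%:R^-1 :> R.
    by rewrite ltrNl opprK invf_lt1 ?ltr0n // ltr1n; lia.
  by rewrite lerNr opprB; apply.
by apply: le_trans (lerD (IH m_gt0) step) _; rewrite addrC subrK.
Qed.

End HarmonicSums.

Section Potential.
Variables (R : realType) (n : nat).
Hypothesis n_ge2 : (2 <= n)%N.
Implicit Types (c : config n) (i j : 'I_n).

Definition potential c : R :=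
  (count_st op2 c)%:R + (n - 1)%:R * hsum R (count_st op1 c) n.

Definition drift c : nat :=
  count_st op1 c * count_st op2 c + count_st undec c * (n - 1 - count_st op2 c).

Definition rate : R := ((n * (n - 1))%:R * (1 + hsum R 1 n))^-1.

Definition pair_avg (F : 'I_n -> 'I_n -> R) : R :=
  \sum_i \sum_(j | j != i) ((n * (n - 1))%:R)^-1 * F i j.

Lemma ler_pair_avg {F G} :
  (forall i j, F i j <= G i j) -> pair_avg F <= pair_avg G.
Proof.
move=> FG; apply: ler_sum => i _; apply: ler_sum => j _.
by apply: ler_wpM2l; rewrite ?invr_ge0 ?ler0n.
Qed.

Lemma pair_avgE F :
  pair_avg F = ((n * (n - 1))%:R)^-1 * \sum_i \sum_(j | j != i) F i j.
Proof. by rewrite mulr_sumr; apply: eq_bigr => i _; rewrite mulr_sumr. Qed.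

Lemma pair_avg_affine (a b : R) F G :
  (forall i j, G i j = a + b * F i j) -> pair_avg G = a + b * pair_avg F.
Proof.
move=> GE; have npos : (n * (n - 1))%:R != 0 :> R by rewrite pnatr_eq0 muln_eq0; lia.
rewrite !pair_avgE; under eq_bigr do under eq_bigr do rewrite GE.
under eq_bigr do rewrite big_split /= -mulr_sumr.
rewrite big_split /= -mulr_sumr mulrDr mulrCA; congr (_ + _).
under eq_bigr do rewrite sumr_const cardC1 card_ord.
rewrite sumr_const card_ord -mulrnA (_ : n.-1 * n = n * (n - 1))%N; last by lia.
by rewrite -[a *+ _]mulr_natr mulrCA mulVf ?mulr1.
Qed.

Lemma potential_ge0 c : 0 <= potential c.
Proof. by rewrite addr_ge0 ?mulr_ge0 ?ler0n ?hsum_ge0. Qed.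

Lemma potential_ge2 c :
  (0 < count_st op1 c)%N -> count_st op2 c != 0%N -> 2 <= potential c.
Proof.
move=> a_gt0 b_neq0; have tot := count_st_sum c.
have b1 : 1 <= (count_st op2 c)%:R :> R by rewrite ler1n lt0n.
have /(ler_wpM2l (ler0n _ (n - 1))) : n.-1%:R^-1 <= hsum R (count_st op1 c) n.
  by apply: hsum_ge_last; lia.
rewrite -subn1 mulfV ?pnatr_eq0; last by lia.
rewrite /potential; lra.
Qed.

Lemma potential_usd1_step c i j :
  potential (usd1_step c i j) - potential c =
    (c i == undec)%:R * (c j == op2)%:R - (c i == op2)%:R * (c j == op1)%:R
    - (n - 1)%:R / (count_st op1 c)%:R * ((c i == undec)%:R * (c j == op1)%:R).
Proof.
have tot := count_st_sum c.
rewrite /usd1_step /potential !count_st_updE /op1 /op2 /undec in tot *.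
move: (count_st_gt0 c i) (count_st_gt0 c j).
case: (c i) => [[]|]; case: (c j) => [[]|] /= gi gj;
  rewrite ?addn0 ?subn0 ?addn1 ?subn1 /=.
all: rewrite ?(mulr0, mul0r, mulr1, subr0, addr0, sub0r, subrr, oppr0) //.
- by rewrite -subn1 natrB //; ring.
- rewrite (@hsum_ltn R (count_st (Some true) c)); last by lia.
  by field; rewrite pnatr_eq0 -lt0n.
- by rewrite -addn1 natrD; ring.
Qed.

Lemma pair_avg_potential c : (0 < count_st op1 c)%N ->
  pair_avg (fun i j => potential (usd1_step c i j))
  = potential c - ((n * (n - 1))%:R)^-1 * (drift c)%:R.
Proof.
move=> a_gt0.
set jump := fun i j => potential (usd1_step c i j) - potential c.
rewrite (@pair_avg_affine (potential c) 1 jump); last by move=> i j; rewrite /jump; ring.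
rewrite mul1r pair_avgE sum_offdiag => [|i]; last by rewrite /jump usd1_step_diag subrr.
under eq_bigr do under eq_bigr do rewrite /jump potential_usd1_step.
under eq_bigr do rewrite !big_split /= !sumrN -[X in _ - X]mulr_sumr.
rewrite !big_split /= !sumrN -mulr_sumr !sum_pair_eq_count.
have tot := count_st_sum c.
rewrite /drift natrD !natrM [(n - 1 - _)%:R]natrB; last by lia.
by field; rewrite !pnatr_eq0 -!lt0n a_gt0 andbT; apply/andP; split; lia.
Qed.

Lemma potential_le_drift c :
  (0 < count_st op1 c)%N -> count_st op2 c != 0%N ->
  potential c <= (1 + hsum R 1 n) * (drift c)%:R.
Proof.
move=> a_gt0 b_neq0; have tot := count_st_sum c.
have b_le : (count_st op2 c)%:R <= (drift c)%:R :> R by rewrite ler_nat /drift; nia.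
have n1_le : (n - 1)%:R <= (drift c)%:R :> R by rewrite ler_nat /drift; nia.
have hs := @hsum_le_hsum1 R _ n a_gt0.
rewrite /potential mulrDl mul1r lerD // mulrC.
by apply: ler_pM; rewrite ?hsum_ge0 ?ler0n.
Qed.

Lemma pair_avg_potential_le c :
  (0 < count_st op1 c)%N -> count_st op2 c != 0%N ->
  pair_avg (fun i j => potential (usd1_step c i j)) <= (1 - rate) * potential c.
Proof.
move=> a_gt0 b_neq0; rewrite pair_avg_potential // mulrBl mul1r lerD2l lerN2.
rewrite /rate invfM -mulrA ler_wpM2l ?invr_ge0 ?ler0n //.
rewrite ler_pdivrMl; last by have := hsum_ge0 R 1 n; lra.
exact: potential_le_drift.
Qed.

Lemma rate_le1 : rate <= 1.
Proof.
have n1 : 1 <= (n * (n - 1))%:R :> R by rewrite ler1n muln_gt0; lia.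
have H0 := hsum_ge0 R 1 n.
by rewrite invf_le1 ?mulr_gt0 //; [nra | lra | lra].
Qed.

Lemma hitP1_succ k c :
  hitP 1 k.+1 c = if count_st op2 c == 0%N then 1
                   else pair_avg (fun i j => hitP 1 k (usd1_step c i j)).
Proof.
rewrite /=; case: ifP => // _; apply: eq_bigr => i _; apply: eq_bigr => j _.
by rewrite (@usd_out1E _ (fun s => hitP 1 k (upd c i s))).
Qed.

Lemma hitP1_tail k c : (0 < count_st op1 c)%N ->
  1 - hitP 1 k c <= (1 - rate) ^+ k * potential c / 2.
Proof.
have decay_ge0 k' : 0 <= (1 - rate) ^+ k' by rewrite exprn_ge0 // subr_ge0 rate_le1.
have tail_ge0 k' c' : 0 <= (1 - rate) ^+ k' * potential c' / 2.
  by rewrite !mulr_ge0 ?decay_ge0 ?potential_ge0 ?invr_ge0.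
elim: k c => [|k IH] c a_gt0.
  rewrite /=; case: ifPn => [_|b_neq0]; first by rewrite subrr tail_ge0.
  by rewrite expr0 mul1r subr0 ler_pdivlMr ?mul1r ?potential_ge2.
rewrite hitP1_succ; case: ifPn => [_|b_neq0]; first by rewrite subrr tail_ge0.
have step_ge i j : 1 + (- ((1 - rate) ^+ k / 2)) * potential (usd1_step c i j)
                   <= hitP 1 k (usd1_step c i j).
  have := IH (usd1_step c i j) (leq_trans a_gt0 (count_op1_usd1_step c i j)); lra.
have := ler_pair_avg step_ge.
rewrite (@pair_avg_affine 1 (- ((1 - rate) ^+ k / 2))
          (fun i j => potential (usd1_step c i j))) //.
have := pair_avg_potential_le c a_gt0 b_neq0.
have := decay_ge0 k; rewrite exprS; nra.
Qed.

End Potential.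

Section Numerics.
Variable R : realType.

Lemma powB_le_expR (r : R) k : r <= 1 -> (1 - r) ^+ k <= expR (- (r * k%:R)).
Proof.
move=> r1; rewrite -mulNr expRM_natr; apply: lerXn2r; rewrite ?nnegrE ?expR_ge0 //.
  by rewrite subr_ge0.
by have := expR_ge1Dx (- r); lra.
Qed.

Lemma quadratic_le_mono (a b c l L : R) : 0 <= a -> l <= L -> b <= 2 * a * l ->
  c + b * l <= a * l ^+ 2 -> c + b * L <= a * L ^+ 2.
Proof.
move=> a0 lL bl cl.
have h1 : 0 <= (L - l) * (2 * a * l - b) by apply: mulr_ge0; lra.
have h2 : 0 <= a * (L - l) ^+ 2 by rewrite mulr_ge0 ?sqr_ge0.
nra.
Qed.

(* The hypotheses of [quadratic_le_mono] for a = 7 t^2, b = 3 t (t-1) y,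
   c = 1 - (t-1) y + t (t-1) y (y-2) / 2 and l = s + 1/t, where y = s + 2,
   after multiplication by t. *)
Definition quadratic_margin (t s : R) : Prop :=
  3 * (t - 1) * (s + 2) <= 14 * (t * s + 1) /\
  3 * (t - 1) * (s + 2) * (t * s + 1) + 1 - (t - 1) * (s + 2)
    + t * (t - 1) * (s + 2) * s / 2 <= 7 * (t * s + 1) ^+ 2.

Lemma quadratic_margin_large (t s : R) : 1 <= t -> 2 <= s -> quadratic_margin t s.
Proof.
move=> t1 s2; have ts : 0 <= t * (t * (s - 2) + s) by nra.
have sts : 0 <= s * (t * (t * (s - 2) + s)) by nra.
by split; nra.
Qed.

Lemma quadratic_margin_harmonic n : (2 <= n)%N ->
  quadratic_margin n%:R (hsum R 1 n - 1).
Proof.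
move=> n2; case: (ltnP n 12) => n12; last first.
  apply: quadratic_margin_large; first by rewrite ler1n; lia.
  have h12 : 3 <= hsum R 1 12 by rewrite /hsum unlock /=; lra.
  by rewrite (@hsum_cat R 1 12 n) //; have := hsum_ge0 R 12 n; lra.
move: n2 n12; rewrite /quadratic_margin.
case: n => [|[|[|[|[|[|[|[|[|[|[|[|n]]]]]]]]]]]] //= _ _.
all: by rewrite /hsum unlock /=; split; lra.
Qed.

End Numerics.

Section Tail.
Variables (R : realType) (n : nat).
Hypothesis n_ge2 : (2 <= n)%N.

Lemma rate_mul_steps_ge k : 7 * n%:R ^+ 2 * ln (n%:R : R) ^+ 2 < k.+1%:R ->
  3 * ln (n%:R : R) - n%:R^-1 + (hsum R 1 n - 1) / 2 <= rate R n * k%:R.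
Proof.
move=> hk; have [p1 p2] := @quadratic_margin_harmonic R n n_ge2.
have lnL := @ln_ge_hsum R n (ltnW n_ge2); rewrite hsum2S ?(ltnW n_ge2) // in lnL.
rewrite /rate natrM natrB ?(ltnW n_ge2) //.
set t := (n%:R : R) in hk p1 p2 lnL *; set H := hsum R 1 n in p1 p2 lnL *.
set L := ln t in hk lnL *; set l := (t * (H - 1) + 1) / t.
have t2 : 2 <= t by rewrite ler_nat.
have H0 : 0 <= H := hsum_ge0 R 1 n.
have t0 : t != 0 by apply/eqP; lra.
have lL : l <= L by rewrite /l (_ : _ / t = H + t^-1 - 1) //; field.
have q : 1 - (t - 1) * (1 + H) + t * (t - 1) * (1 + H) * (H - 1) / 2
           + 3 * t * (t - 1) * (1 + H) * L <= 7 * t ^+ 2 * L ^+ 2.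
  apply: (@quadratic_le_mono R _ _ _ l _ _ lL); first by rewrite mulr_ge0 ?sqr_ge0.
    rewrite (_ : 2 * _ * l = t * (14 * (t * (H - 1) + 1))); last by rewrite /l; field.
    by have := ler_wpM2l (_ : 0 <= t) p1; lra.
  rewrite (_ : _ * l ^+ 2 = 7 * (t * (H - 1) + 1) ^+ 2); last by rewrite /l; field.
  rewrite (_ : _ * (1 + H) * l = 3 * (t - 1) * (1 + H) * (t * (H - 1) + 1)).
    by lra.
  by rewrite /l; field.
have -> : 3 * L - t^-1 + (H - 1) / 2 = (t * (t - 1) * (1 + H))^-1 *
    (1 - (t - 1) * (1 + H) + t * (t - 1) * (1 + H) * (H - 1) / 2
     + 3 * t * (t - 1) * (1 + H) * L - 1).
  by field; apply/and3P; split; apply/eqP; lra.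
by rewrite ler_wpM2l ?invr_ge0 ?mulr_ge0 ?subr_ge0 //; lra.
Qed.

Lemma decay_potential_le k : 7 * n%:R ^+ 2 * ln (n%:R : R) ^+ 2 < k.+1%:R ->
  (1 - rate R n) ^+ k * ((n - 1)%:R * (1 + hsum R 1 n)) / 2 <= (n%:R ^+ 2)^-1.
Proof.
move=> hk; have kr := rate_mul_steps_ge k hk.
have r1 := @rate_le1 R n n_ge2; rewrite natrB ?(ltnW n_ge2) //.
set r := rate R n in kr r1 *; set t := (n%:R : R) in kr *.
set H := hsum R 1 n in kr *; set L := ln t in kr.
have t2 : 2 <= t by rewrite ler_nat.
have H0 : 0 <= H := hsum_ge0 R 1 n.
have e1 := @powB_le_expR R r k r1.
have e2 : t - 1 <= t * expR (- t^-1).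
  have := ler_wpM2l (_ : 0 <= t) (expR_ge1Dx (- t^-1)).
  by rewrite mulrDr mulr1 mulrN mulfV //; [apply; lra | apply/eqP; lra].
have e3 : (1 + H) / 2 <= expR ((H - 1) / 2) by have := expR_ge1Dx ((H - 1) / 2); lra.
have tE : t = expR L by rewrite /L lnK // posrE; lra.
rewrite (_ : _ / 2 = (1 - r) ^+ k * (t - 1) * ((1 + H) / 2)); last by ring.
apply: (@le_trans _ _ (expR (- (r * k%:R)) * (t * expR (- t^-1)) * expR ((H - 1) / 2))).
  by rewrite !ler_pM ?mulr_ge0 ?exprn_ge0 ?expR_ge0 ?subr_ge0 //; lra.
apply: (@le_trans _ _ (expR (- (L * 2)))); last by rewrite expRN expRM_natr -tE.
by rewrite {1}tE -!expRD ler_expR; lra.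
Qed.

End Tail.

Theorem lemma12 (R : realType) (n : nat) (c0 : config n) :
  (2 <= n)%N ->
  count_st op1 c0 = 1%N -> count_st op2 c0 = (n - 1)%N -> count_st undec c0 = 0%N ->
  forall k : nat,
    (k%:R <= 7 * n%:R ^+ 2 * (ln (n%:R : R)) ^+ 2 < k.+1%:R) ->
    1 - (n%:R ^+ 2)^-1 <= hitP (1 : R) k c0.
Proof.
move=> n_ge2 a1 b1 _ k /andP[_ hk].
have := @hitP1_tail R n n_ge2 k c0; rewrite a1 => /(_ isT).
rewrite /potential a1 b1 => tail.
by have := @decay_potential_le R n n_ge2 k hk; lra.
Qed.
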